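(* Let $k$ be a natural number, let $(X,\Sigma)$ be a measurable space, and let $\mu,\nu$ be finite measures on $(X,\Sigma)$ with $\mu$ absolutely continuous with respect to $\nu$; let $f\colon X\to[0,\infty)$ be a (measurable) Radon–Nikodym derivative $f=\frac{d\mu}{d\nu}$. Assume that one of the following holds: (I) $G=\mathbb{R}$ and $\nu$ is non-atomic; or (II) $G=\mathbb{Z}$, $X$ is finite, $\Sigma=2^X$, and $\nu$ is the counting measure. Let $q=(q_1,\dots,q_k)\in(G\cap[0,\infty))^k$ satisfy $q_1+\dots+q_k=\nu(X)$, and let $s_1\le s_2\le\dots\le s_k$ be real numbers. For $P=(A_1,\dots,A_k)\in\mathcal{P}_{\nu,q}$ define the score $s(P):=\sum_{i=1}^k s_i\,\mu(A_i)$. Let $Q=(B_1,\dots,B_k)\in\mathcal{P}_{\nu,q}$ be any partition such that $\sup_{B_i}f\le\inf_{B_j}f$ for all $i,j\in[k]$ with $i<j$ (with the conventions $\sup\emptyset=-\infty$, $\inf\emptyset=\infty$). Then $s(Q)\ge s(P)$ for every $P\in\mathcal{P}_{\nu,q}$.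
   Context: $[k]:=\{1,\dots,k\}$. $\mathcal{P}_k$ denotes the set of all ordered partitions $P=(A_1,\dots,A_k)$ of $X$ with $A_i\in\Sigma$ for all $i$ (i.e. the $A_i$ are pairwise disjoint measurable sets, possibly empty, whose union is $X$). $\mathcal{P}_{\nu,q}:=\{P=(A_1,\dots,A_k)\in\mathcal{P}_k:\ \nu(A_i)=q_i\ \text{for all } i\in[k]\}$. *)

From HB Require Import structures.
From mathcomp Require Import all_boot all_order all_algebra.
From mathcomp Require Import all_classical all_reals all_analysis.
Set Implicit Arguments. Unset Strict Implicit. Unset Printing Implicit Defensive.
Import Order.TTheory GRing.Theory Num.Theory.
Local Open Scope classical_set_scope.
Local Open Scope ring_scope.

Definition is_atom d (X : measurableType d) (R : realType)
  (nu : set X -> \bar R) (A : set X) : Prop :=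
  measurable A /\ (0 < nu A)%E /\
  forall B, measurable B -> B `<=` A -> nu B = 0%E \/ nu B = nu A.

Definition nonatomic d (X : measurableType d) (R : realType)
  (nu : set X -> \bar R) : Prop := forall A, ~ is_atom nu A.

Definition is_partition d (X : measurableType d) (k : nat)
  (A : 'I_k -> set X) : Prop :=
  (forall i, measurable (A i)) /\ trivIset setT A /\ \bigcup_i A i = setT.

Definition in_Pnuq d (X : measurableType d) (R : realType) (k : nat)
  (nu : set X -> \bar R) (q : 'I_k -> R) (A : 'I_k -> set X) : Prop :=
  is_partition A /\ forall i, nu (A i) = (q i)%:E.

Definition score d (X : measurableType d) (R : realType) (k : nat)
  (mu : set X -> \bar R) (s : 'I_k -> R) (A : 'I_k -> set X) : \bar R :=
  (\sum_(i < k) (s i)%:E * mu (A i))%E.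

(* Only tails of partitions matter.  Since s is nondecreasing and all
   partitions in P_{nu,q} have total mu-mass mu(X), Abel summation reduces
   s(P) <= s(Q) to mu(P_m u ... u P_k) <= mu(B_m u ... u B_k) for every m.
   These two tail unions S and T have the same nu-measure, and T is an upper
   set for f because Q is sorted.  Hence on the symmetric difference f stays
   below c := inf f(T \ S) on S \ T and above c on T \ S, and integrating
   the density f against nu gives mu(S) <= mu(T).  Neither case (I)/(II) nor
   absolute continuity (already implied by the density) is needed. *)

From HB Require Import structures.
From mathcomp Require Import all_boot all_order all_algebra.
From mathcomp Require Import all_classical all_reals all_analysis.
From mathcomp Require Import measurable_realfun.
Set Implicit Arguments.
Unset Strict Implicit.
Unset Printing Implicit Defensive.

Import Order.TTheory GRing.Theory Num.Theory.
Local Open Scope classical_set_scope.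
Local Open Scope ring_scope.

Lemma sum_mul_ge_of_tail_ge0 (R : realDomainType) (k : nat) (s c : 'I_k -> R) (r : R) :
  (forall i j : 'I_k, (i <= j)%N -> s i <= s j) -> (forall i, r <= s i) ->
  (forall m, 0 <= \sum_(i < k | (m <= i)%N) c i) ->
  r * \sum_(i < k) c i <= \sum_(i < k) s i * c i.
Proof.
elim: k s c r => [|k IH] s c r s_mono r_le c_tail; first by rewrite !big_ord0 mulr0.
have c_tail_lift m :
    \sum_(i < k.+1 | (m.+1 <= i)%N) c i = \sum_(i < k | (m <= i)%N) c (lift ord0 i).
  rewrite big_mkcond big_ord_recl [RHS]big_mkcond /= add0r.
  by apply: eq_bigr => i _; rewrite /= /bump add1n ltnS.
have c_sum_ge0 : 0 <= \sum_(i < k.+1) c i.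
  by have := c_tail 0%N; under eq_bigl do rewrite leq0n.
apply: (@le_trans _ _ (s ord0 * \sum_(i < k.+1) c i)); first exact: ler_wpM2r.
rewrite !big_ord_recl mulrDr lerD2l.
apply: IH => [i j ij | i | n]; [exact: s_mono | exact: s_mono | by rewrite -c_tail_lift].
Qed.

Lemma sum_mul_le_of_tail_le (R : realDomainType) (k : nat) (s a b : 'I_k -> R) :
  (forall i j : 'I_k, (i <= j)%N -> s i <= s j) ->
  (forall m, \sum_(i < k | (m <= i)%N) a i <= \sum_(i < k | (m <= i)%N) b i) ->
  \sum_(i < k) a i = \sum_(i < k) b i ->
  \sum_(i < k) s i * a i <= \sum_(i < k) s i * b i.
Proof.
case: k s a b => [|k] s a b s_mono ab_tail ab_sum; first by rewrite !big_ord0.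
rewrite -subr_ge0 -sumrB.
under eq_bigr do rewrite -mulrBr.
have := @sum_mul_ge_of_tail_ge0 _ _ s (fun i => b i - a i) (s ord0) s_mono.
rewrite /= sumrB ab_sum subrr mulr0.
apply=> [i | m]; first exact: s_mono.
by rewrite sumrB subr_ge0.
Qed.

Lemma eq_measureD (R : realType) (d : measure_display) (X : measurableType d)
    (nu : {finite_measure set X -> \bar R}) (S T : set X) :
  measurable S -> measurable T -> nu S = nu T -> nu (S `\` T) = nu (T `\` S).
Proof.
move=> mS mT nuST.
by rewrite !measureD ?ltey_eq ?fin_num_measure // [T `&` S]setIC; congr (_ - _)%E.
Qed.

Lemma integral_le_of_threshold (R : realType) (d : measure_display)
    (X : measurableType d) (nu : {measure set X -> \bar R}) (f : X -> R)
    (D E : set X) (c : R) :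
  measurable_fun setT f -> (forall x, 0 <= f x) ->
  measurable D -> measurable E -> nu D = nu E ->
  (forall x, D x -> f x <= c) -> (forall y, E y -> c <= f y) -> 0 <= c ->
  (\int[nu]_(x in D) (f x)%:E <= \int[nu]_(x in E) (f x)%:E)%E.
Proof.
move=> mf f_ge0 mD mE nuDE fD fE c_ge0.
have mfE (A : set X) : measurable A -> measurable_fun A (EFin \o f).
  by move=> mA; apply/measurable_EFinP; exact: measurable_funTS.
apply: (@le_trans _ _ (\int[nu]_(x in D) (cst c%:E) x)%E).
  apply: ge0_le_integral => //.
  - by move=> x _; rewrite lee_fin.
  - exact: mfE.
rewrite integral_cst // nuDE -integral_cst //.
by apply: ge0_le_integral => //; exact: mfE.
Qed.

Section density_comparison.
Context (R : realType) (d : measure_display) (X : measurableType d).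
Variables (mu : {measure set X -> \bar R}) (nu : {finite_measure set X -> \bar R}).
Variable f : X -> R.
Hypotheses (mf : measurable_fun setT f) (f_ge0 : forall x, 0 <= f x).
Hypothesis mu_density : forall A, measurable A -> mu A = (\int[nu]_(x in A) (f x)%:E)%E.

Lemma measure_le_of_upper (S T : set X) : measurable S -> measurable T ->
  nu S = nu T -> (forall x y, ~ T x -> T y -> f x <= f y) -> (mu S <= mu T)%E.
Proof.
move=> mS mT nuST T_upper.
rewrite (measureDI mu mS mT) (measureDI mu mT mS) [S `&` T]setIC.
apply: leeD => //.
have [mST mTS] := (measurableD mS mT, measurableD mT mS).
(* [measureDI] exposes [mu] through its content structure *)
change (mu (S `\` T) <= mu (T `\` S))%E; rewrite !mu_density //.
have [[y0 TSy0]|TS0] := pselect (exists y, (T `\` S) y); last first.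
  have nu_ST0 : nu (S `\` T) = 0%E.
    rewrite eq_measureD //; suff -> : T `\` S = set0 by rewrite measure0.
    by apply/seteqP; split=> // y TSy; apply: TS0; exists y.
  rewrite null_set_integral //; last first.
    by apply/measurable_EFinP; exact: measurable_funTS.
  by apply: integral_ge0 => x _; rewrite lee_fin.
pose c := inf [set f y | y in T `\` S].
have f_img_lb : has_lbound [set f y | y in T `\` S] by exists 0 => _ [y _ <-].
apply: (integral_le_of_threshold (c := c)) => //.
- by apply: eq_measureD.
- move=> x [Sx nTx]; apply: lb_le_inf => [|_ [y [Ty _] <-]]; last exact: T_upper.
  by exists (f y0), y0.
- by move=> y TSy; apply: ge_inf => //; exists y.
- by apply: lb_le_inf => [|_ [y _ <-]]; [exists (f y0), y0|].
Qed.

End density_comparison.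

Lemma bigsetU_ordP (T : Type) (k : nat) (P : pred 'I_k) (A : 'I_k -> set T) x :
  (\big[setU/set0]_(i < k | P i) A i) x <-> exists2 i, P i & A i x.
Proof.
rewrite -bigcup_seq_cond; split=> [[i /andP[_ Pi] Aix]|[i Pi Aix]]; first by exists i.
by exists i => //; rewrite /= mem_index_enum.
Qed.

Lemma sum_measure_partition (R : realType) (d : measure_display)
    (X : measurableType d) (mu : {measure set X -> \bar R}) (k : nat)
    (A : 'I_k -> set X) :
  is_partition A -> (\sum_(i < k) mu (A i))%E = mu setT.
Proof.
move=> [mA [tA cA]]; rewrite -measure_bigsetU_ord //; congr (mu _).
apply/seteqP; split=> // x _; have : (\bigcup_i A i) x by rewrite cA.
by case=> i _ Aix; apply/bigsetU_ordP; exists i.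
Qed.

Lemma fine_sum_measure (R : realType) (d : measure_display)
    (X : measurableType d) (mu : {finite_measure set X -> \bar R}) (k : nat)
    (P : pred 'I_k) (A : 'I_k -> set X) :
  (forall i, measurable (A i)) ->
  (\sum_(i < k | P i) fine (mu (A i)))%:E = (\sum_(i < k | P i) mu (A i))%E.
Proof.
by move=> mA; rewrite -sumEFin; apply: eq_bigr => i _; rewrite fineK ?fin_num_measure.
Qed.

Lemma score_EFin (R : realType) (d : measure_display) (X : measurableType d)
    (mu : {finite_measure set X -> \bar R}) (k : nat) (s : 'I_k -> R)
    (A : 'I_k -> set X) :
  (forall i, measurable (A i)) ->
  score mu s A = (\sum_(i < k) s i * fine (mu (A i)))%:E.
Proof.
move=> mA; rewrite /score -sumEFin; apply: eq_bigr => i _.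
by rewrite EFinM fineK ?fin_num_measure.
Qed.

Lemma sorted_partition_tail_upper (R : realType) (T : Type) (k : nat)
    (B : 'I_k -> set T) (f : T -> R) (m : nat) :
  \bigcup_i B i = setT ->
  (forall i j : 'I_k, (i < j)%N ->
     (ereal_sup ((fun x => (f x)%:E) @` B i) <=
      ereal_inf ((fun x => (f x)%:E) @` B j))%E) ->
  forall x y, ~ (\big[setU/set0]_(i < k | (m <= i)%N) B i) x ->
    (\big[setU/set0]_(i < k | (m <= i)%N) B i) y -> f x <= f y.
Proof.
move=> cB B_sorted x y nx /bigsetU_ordP[j mj Bjy].
have : (\bigcup_i B i) x by rewrite cB.
case=> i _ Bix; have ij : (i < j)%N.
  rewrite (leq_trans _ mj) // ltnNge; apply: contra_notN nx => mi.
  by apply/bigsetU_ordP; exists i.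
rewrite -lee_fin; apply: le_trans _ (le_trans (B_sorted i j ij) _).
- by apply: ereal_sup_ubound; exists x.
- by apply: ereal_inf_lbound; exists y.
Qed.

Theorem theorem3 (R : realType) (k : nat) (d : measure_display)
  (X : measurableType d)
  (mu nu : {finite_measure set X -> \bar R})
  (Hac : mu `<< nu)
  (f : X -> R) (Hfm : measurable_fun setT f) (Hf0 : forall x, 0 <= f x)
  (Hf : forall A, measurable A -> mu A = (\int[nu]_(x in A) (f x)%:E)%E)
  (q : 'I_k -> R)
  (Hcase :
     (* (I) G = R, nu non-atomic *)
     (nonatomic nu /\ (forall i, 0 <= q i))
     \/
     (* (II) G = Z, X finite, Sigma = 2^X, nu counting measure *)
     (finite_set [set: X] /\ (forall A : set X, measurable A) /\
      (forall A : set X, nu A = @counting X R A) /\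
      (forall i, q i \is a Num.nat)))
  (Hq : (\sum_(i < k) (q i)%:E)%E = nu setT)
  (s : 'I_k -> R) (Hs : forall i j : 'I_k, (i <= j)%N -> s i <= s j)
  (B : 'I_k -> set X) (HB : in_Pnuq nu q B)
  (HBsort : forall i j : 'I_k, (i < j)%N ->
     (ereal_sup ((fun x => (f x)%:E) @` B i) <=
      ereal_inf ((fun x => (f x)%:E) @` B j))%E) :
  forall P : 'I_k -> set X, in_Pnuq nu q P ->
    (score mu s P <= score mu s B)%E.
Proof.
move=> P [[mP [tP cP]] nuP]; case: HB => [[mB [tB cB]] nuB].
rewrite !score_EFin // lee_fin.
apply: sum_mul_le_of_tail_le => // [m|].
- rewrite -lee_fin !fine_sum_measure // -!measure_bigsetU_ord //.
  apply: (measure_le_of_upper Hfm Hf0 Hf).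
  + by apply: bigsetU_measurable => i _.
  + by apply: bigsetU_measurable => i _.
  + rewrite !measure_bigsetU_ord //; apply: eq_bigr => i _.
    exact: etrans (nuP i) (esym (nuB i)).
  + exact: sorted_partition_tail_upper.
- by apply: EFin_inj; rewrite !fine_sum_measure // !sum_measure_partition.
Qed.
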